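(* Let $R$ be a ring and let $\mathcal{S}$ be a sublattice of the lattice $\mathbb{I}(R)$ of two-sided ideals of $R$ which is closed under arbitrary intersections and contains $\{0\}$ and $R$. For $T\subseteq \mathrm{Spec}_{\mathcal{S}}(R)$ put $\ker(T)=\bigcap_{\mathfrak{p}\in T}\mathfrak{p}$ (with $\ker(\emptyset)=R$) and $\overline{T}=\{\mathfrak{p}\in\mathrm{Spec}_{\mathcal{S}}(R): \mathfrak{p}\supseteq \ker(T)\}$. Then this closure operation satisfies the Kuratowski closure axioms: (1) $\overline{\emptyset}=\emptyset$; (2) $T\subseteq\overline{T}$ for all $T\subseteq\mathrm{Spec}_{\mathcal{S}}(R)$; (3) $\overline{\overline{T}}=\overline{T}$ for all $T$; (4) $\overline{T_1\cup T_2}=\overline{T_1}\cup\overline{T_2}$ for all $T_1,T_2\subseteq \mathrm{Spec}_{\mathcal{S}}(R)$.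
   Context: For a sublattice $\mathcal{S}$ of ideals of $R$ containing $\{0\}$ and $R$, an ideal $P\in\mathcal{S}$ is called $\mathcal{S}$-prime if $P\neq R$ and for all $I,J\in\mathcal{S}$, $IJ\subseteq P$ implies $I\subseteq P$ or $J\subseteq P$. $\mathrm{Spec}_{\mathcal{S}}(R)$ denotes the set of all $\mathcal{S}$-prime ideals of $R$. *)

From HB Require Import structures.
From mathcomp Require Import all_boot all_algebra.
From mathcomp Require Import boolp classical_sets.
Set Implicit Arguments. Unset Strict Implicit. Unset Printing Implicit Defensive.
Import GRing.Theory.
Local Open Scope classical_set_scope.
Local Open Scope ring_scope.

Section IdealLattice.
Variable R : nzRingType.

Definition is_ideal (I : set R) : Prop :=
  [/\ I 0,
      (forall x y, I x -> I y -> I (x - y)),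
      (forall r x, I x -> I (r * x)) &
      (forall r x, I x -> I (x * r))].

Inductive ideal_mul (I J : set R) : set R :=
  | ideal_mul0 : ideal_mul I J 0
  | ideal_mulM a b : I a -> J b -> ideal_mul I J (a * b)
  | ideal_mulD x y : ideal_mul I J x -> ideal_mul I J y -> ideal_mul I J (x + y).

Definition ideal_add (I J : set R) : set R :=
  [set x | exists a b, [/\ I a, J b & x = a + b]].

Definition good_sublattice (S : set (set R)) : Prop :=
  [/\ (forall I, S I -> is_ideal I),
      S [set 0], S setT,
      (forall I J, S I -> S J -> S (ideal_add I J) /\ S (I `&` J)) &
      (forall F : set (set R), F `<=` S -> S (\bigcap_(I in F) I))].

Definition S_prime (S : set (set R)) (P : set R) : Prop :=
  [/\ S P, P <> setT &
      forall I J, S I -> S J -> ideal_mul I J `<=` P -> I `<=` P \/ J `<=` P].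

Definition SpecS (S : set (set R)) : set (set R) := [set P | S_prime S P].

Definition kerT (T : set (set R)) : set R := \bigcap_(p in T) p.

Definition Sclosure (S : set (set R)) (T : set (set R)) : set (set R) :=
  [set p | SpecS S p /\ kerT T `<=` p].

End IdealLattice.

(* The closure of T is the hull of ker T, so (1)-(3) are formal: ker of the
   empty family is R, which is not S-prime, and the closure of T has the same
   kernel as T.  For (4), ker (T1 u T2) = ker T1 n ker T2 contains the product
   ker T1 * ker T2, and an S-prime containing that product contains one of the
   two kernels, which lie in S because S is closed under intersections. *)
From mathcomp Require Import all_boot all_algebra.
From mathcomp Require Import boolp classical_sets.
Set Implicit Arguments. Unset Strict Implicit. Unset Printing Implicit Defensive.
Local Open Scope classical_set_scope.
Import GRing.Theory.

Section IdealMul.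
Variable R : nzRingType.
Implicit Types I J P : set R.

Lemma is_idealD P x y : is_ideal P -> P x -> P y -> P (x + y)%R.
Proof.
case=> P0 PB _ _ Px Py.
have PNy : P (- y)%R by rewrite -[(- y)%R]add0r; apply: PB.
by rewrite -[y]opprK; apply: PB.
Qed.

Lemma ideal_mul_sub I J P : is_ideal P ->
  (forall a b, I a -> J b -> P (a * b)%R) -> ideal_mul I J `<=` P.
Proof.
move=> idP IJP x; elim=> [|a b Ia Jb|u v _ Pu _ Pv].
- by case: idP.
- exact: IJP.
- exact: is_idealD.
Qed.

Lemma ideal_mul_subI I J : is_ideal I -> is_ideal J ->
  ideal_mul I J `<=` I `&` J.
Proof.
move=> idI idJ; rewrite subsetI; split; apply: ideal_mul_sub => // a b Ia Jb.
- by case: idI => _ _ _ IMr; apply: IMr.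
- by case: idJ => _ _ IMl _; apply: IMl.
Qed.

Lemma S_prime_subI S P I J : (forall K, S K -> is_ideal K) ->
  S_prime S P -> S I -> S J -> I `&` J `<=` P -> I `<=` P \/ J `<=` P.
Proof.
move=> Sid [_ _ primeP] SI SJ IJP; apply: primeP => //.
by move=> x /(ideal_mul_subI (Sid _ SI) (Sid _ SJ)) /IJP.
Qed.

End IdealMul.

Section Kernel.
Variable R : nzRingType.
Implicit Types (S T : set (set R)) (p : set R).

Lemma kerT_set0 : kerT (@set0 (set R)) = setT.
Proof. exact: bigcap_set0. Qed.

Lemma kerT_setU T1 T2 : kerT (T1 `|` T2) = kerT T1 `&` kerT T2.
Proof. exact: bigcap_setU. Qed.

Lemma kerT_sub T p : T p -> kerT T `<=` p.
Proof. exact: bigcap_inf. Qed.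

Lemma kerT_anti T1 T2 : T1 `<=` T2 -> kerT T2 `<=` kerT T1.
Proof. by move=> T12 x Kx p /T12; apply: Kx. Qed.

Lemma S_kerT S T : good_sublattice S -> T `<=` SpecS S -> S (kerT T).
Proof. by case=> _ _ _ _ SB TS; apply: SB => p /TS []. Qed.

Lemma Sclosure_kerT_anti S T1 T2 : kerT T2 `<=` kerT T1 ->
  Sclosure S T1 `<=` Sclosure S T2.
Proof. by move=> K21 p [Sp K1p]; split => // x /K21 /K1p. Qed.

Lemma sub_Sclosure S T : T `<=` SpecS S -> T `<=` Sclosure S T.
Proof. by move=> TS p Tp; split; [apply: TS | apply: kerT_sub]. Qed.

Lemma kerT_Sclosure S T : T `<=` SpecS S -> kerT (Sclosure S T) = kerT T.
Proof.
move=> TS; apply/seteqP; split; first by apply: kerT_anti; apply: sub_Sclosure.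
by apply: sub_bigcap => p [].
Qed.

Lemma Sclosure_set0 S : Sclosure S set0 = set0.
Proof.
apply/seteqP; split => // p [[_ pNT _]]; rewrite kerT_set0 => Tp.
by apply: pNT; apply/seteqP.
Qed.

Lemma Sclosure_setU S T1 T2 : good_sublattice S ->
  T1 `<=` SpecS S -> T2 `<=` SpecS S ->
  Sclosure S (T1 `|` T2) = Sclosure S T1 `|` Sclosure S T2.
Proof.
move=> hS T1S T2S; apply/seteqP; split; last first.
  by rewrite subUset; split; apply: Sclosure_kerT_anti; apply: kerT_anti.
move=> p [Sp]; rewrite kerT_setU => Kp.
have Sid : forall K, S K -> is_ideal K by case: hS.
have [K1p|K2p] := S_prime_subI Sid Sp (S_kerT hS T1S) (S_kerT hS T2S) Kp.
- by left.
- by right.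
Qed.

End Kernel.

Theorem lemma3p2 (R : nzRingType) (S : set (set R)) (hS : good_sublattice S) :
  [/\ Sclosure S set0 = set0,
      (forall T, T `<=` SpecS S -> T `<=` Sclosure S T),
      (forall T, T `<=` SpecS S -> Sclosure S (Sclosure S T) = Sclosure S T) &
      (forall T1 T2, T1 `<=` SpecS S -> T2 `<=` SpecS S ->
         Sclosure S (T1 `|` T2) = Sclosure S T1 `|` Sclosure S T2)].
Proof.
split.
- exact: Sclosure_set0.
- exact: sub_Sclosure.
- by move=> T TS; rewrite /Sclosure kerT_Sclosure.
- by move=> T1 T2; apply: Sclosure_setU.
Qed.
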